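(* Let $N\ge1$ and let $\mu^\star_0$ be any absolutely continuous probability measure on $\mathbb{R}^d$ with finite second moment. Then there exist absolutely continuous data $(\mu^\star_{i/N})_{i=1}^N$ and an optimal solution $(Y_t)$ of the P-spline problem for $(\mu^\star_{i/N})_{i=0}^N$ such that $Y_1$ is not a deterministic function of $Y_0$.
   Context: The P-spline problem with data $\mu^\star_{t_0},\dots,\mu^\star_{t_N}$ at times $0=t_0<\dots<t_N=1$ is $\inf_{(Y_t)}\int_0^1\mathbb E[\|\ddot Y_t\|^2]\,dt$ over stochastic processes $(Y_t)_{t\in[0,1]}$ in $\mathbb{R}^d$ with twice differentiable paths and $Y_{t_i}\sim\mu^\star_{t_i}$ for all $i$. Here $t_i=i/N$. *)

(* R^d is modelled as d.-tuple R, which carries the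
   product (= Borel) sigma-algebra of mathcomp-analysis. *)
From HB Require Import structures.
From mathcomp Require Import all_boot all_order all_algebra.
From mathcomp Require Import all_classical all_reals all_analysis.
Set Implicit Arguments. Unset Strict Implicit. Unset Printing Implicit Defensive.
Import Order.TTheory GRing.Theory Num.Theory.
Import numFieldNormedType.Exports.
Local Open Scope classical_set_scope.
Local Open Scope ring_scope.

Section PSpline.
Context {R : realType} (d : nat).

Definition sqnorm (x : d.-tuple R) : R := \sum_(i < d) tnth x i ^+ 2.

Definition box (a b : d.-tuple R) : set (d.-tuple R) :=
  [set x | forall i, tnth a i <= tnth x i <= tnth b i].
Definition box_vol (a b : d.-tuple R) : R := \prod_(i < d) (tnth b i - tnth a i).

Definition lebesgue_null (A : set (d.-tuple R)) : Prop :=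
  forall eps : R, 0 < eps -> exists a b : nat -> d.-tuple R,
    (forall k i, tnth (a k) i <= tnth (b k) i) /\
    A `<=` \bigcup_k box (a k) (b k) /\
    (\sum_(0 <= k <oo) (box_vol (a k) (b k))%:E <= eps%:E)%E.

Definition abs_cont (mu : probability (d.-tuple R) R) : Prop :=
  forall A, measurable A -> lebesgue_null A -> mu A = 0%E.

Definition finite_second_moment (mu : probability (d.-tuple R) R) : Prop :=
  (\int[mu]_x (sqnorm x)%:E < +oo)%E.

Definition coord_path {T : Type} (Y : R -> T -> d.-tuple R) (w : T) (i : 'I_d)
  : R -> R := fun s => tnth (Y s w) i.

Definition accel {T : Type} (Y : R -> T -> d.-tuple R) (w : T) (t : R)
  : d.-tuple R := [tuple derive1 (derive1 (coord_path Y w i)) t | i < d].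

Definition admissible {dO : measure_display} {O : measurableType dO}
  (P : probability O R) (N : nat) (mu : nat -> probability (d.-tuple R) R)
  (Y : R -> O -> d.-tuple R) : Prop :=
  [/\ forall t, measurable_fun setT (Y t),
      forall w i t, derivable (coord_path Y w i) t 1 /\
                    derivable (derive1 (coord_path Y w i)) t 1 &
      forall k : nat, (k <= N)%N -> forall A, measurable A ->
        P (Y (k%:R / N%:R) @^-1` A) = mu k A].

Definition spline_cost {dO : measure_display} {O : measurableType dO}
  (P : probability O R) (Y : R -> O -> d.-tuple R) : \bar R :=
  (\int[lebesgue_measure]_(t in `[0%R, 1%R]) \int[P]_w (sqnorm (accel Y w t))%:E)%E.

Definition optimal_solution {dO : measure_display} {O : measurableType dO}
  (P : probability O R) (N : nat) (mu : nat -> probability (d.-tuple R) R)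
  (Y : R -> O -> d.-tuple R) : Prop :=
  admissible P N mu Y /\
  forall (dO' : measure_display) (O' : measurableType dO')
         (P' : probability O' R) (Y' : R -> O' -> d.-tuple R),
    admissible P' N mu Y' -> (spline_cost P Y <= spline_cost P' Y')%E.

End PSpline.

(** Split the initial mass with a fair coin: under the coin's "tails" a
   particle sits still at its starting point x ~ mu0, under "heads" it moves
   with unit speed along the diagonal (1, ..., 1).  All paths are affine, so
   the process has zero acceleration cost and is optimal for its own marginals,
   which are absolutely continuous because Lebesgue-null sets are invariant
   under translation.  But given Y_0 = x, Y_1 equals x or x + (1, ..., 1) with
   probability 1/2 each, so Y_1 is not a function of Y_0. *)

From HB Require Import structures.
From mathcomp Require Import all_boot all_order all_algebra.
From mathcomp Require Import all_classical all_reals all_analysis.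
From mathcomp Require Import ring.
Import Order.TTheory GRing.Theory Num.Theory.
Import numFieldNormedType.Exports.
Local Open Scope classical_set_scope.
Local Open Scope ring_scope.

Section affine_path.
Context {R : realType} (a c : R).

Lemma is_derive_affine (t : R) : is_derive t 1 (fun s : R => a + s * c) c.
Proof.
by apply: is_derive_eq; rewrite add0r mul1r scaler0 add0r; exact: mulr1.
Qed.

Lemma derive1_affine : derive1 (fun s : R => a + s * c) = cst c.
Proof.
apply/funext => t; have df := is_derive_affine t.
by rewrite derive1E derive_val.
Qed.

Lemma derivable_affine (t : R) : derivable (fun s : R => a + s * c) t 1.
Proof. by have [] := is_derive_affine t. Qed.

Lemma derivable_derive1_affine (t : R) :
  derivable (derive1 (fun s : R => a + s * c)) t 1.
Proof. by rewrite derive1_affine; exact: derivable_cst. Qed.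

Lemma derive1_derive1_affine (t : R) :
  derive1 (derive1 (fun s : R => a + s * c)) t = 0.
Proof. by rewrite derive1_affine derive1_cst. Qed.

End affine_path.

Section spline_cost.
Context {R : realType} {d : nat} {dO : measure_display} {O : measurableType dO}.
Variable P : probability O R.

Lemma spline_cost_ge0 (Y : R -> O -> d.-tuple R) : (0 <= spline_cost P Y)%E.
Proof.
apply: integral_ge0 => t _; apply: integral_ge0 => w _.
by rewrite lee_fin; apply: sumr_ge0 => i _; exact: sqr_ge0.
Qed.

Lemma spline_cost_eq0 (Y : R -> O -> d.-tuple R) :
  (forall w i t, derive1 (derive1 (coord_path Y w i)) t = 0) ->
  spline_cost P Y = 0%E.
Proof.
move=> Y''0; rewrite /spline_cost (eq_integral (cst 0%E)) ?integral0 // => t _.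
rewrite (eq_integral (cst 0%E)) ?integral0 // => w _.
by rewrite /sqnorm big1 // => i _; rewrite tnth_mktuple Y''0 expr0n.
Qed.

End spline_cost.

Lemma optimal_solution_cost0 {R : realType} {d : nat}
    {dO : measure_display} {O : measurableType dO} (P : probability O R)
    (N : nat) (mu : nat -> probability (d.-tuple R) R)
    (Y : R -> O -> d.-tuple R) :
  admissible P N mu Y -> spline_cost P Y = 0%E -> optimal_solution P N mu Y.
Proof.
move=> adm cost0; split=> // dO' O' P' Y' _.
by rewrite cost0; exact: spline_cost_ge0.
Qed.

Section diagonal_shift.
Context {R : realType} {d : nat}.

Definition diag_shift (c : R) (x : d.-tuple R) : d.-tuple R :=
  [tuple tnth x i + c | i < d].

Lemma diag_shift0 : diag_shift 0 = id.
Proof.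
by apply/funext => x; apply: eq_from_tnth => i; rewrite tnth_mktuple addr0.
Qed.

Lemma measurable_diag_shift (c : R) : measurable_fun setT (diag_shift c).
Proof.
apply/measurable_fun_tnthP => i.
have -> : (fun x => tnth x i) \o diag_shift c = (fun x => tnth x i + c).
  by apply/funext => x /=; rewrite tnth_mktuple.
exact: measurable_realfun.measurable_funD (measurable_tnth i)
  (measurable_cst c).
Qed.

Lemma diag_shift_neq (d_gt0 : (0 < d)%N) (c : R) x :
  c != 0 -> diag_shift c x != x.
Proof.
apply: contra => /eqP/(congr1 (fun y => tnth y (Ordinal d_gt0))).
by rewrite tnth_mktuple => /eqP; rewrite -subr_eq0 addrAC subrr add0r.
Qed.

Lemma lebesgue_null_diag_shift (c : R) (A : set (d.-tuple R)) :
  lebesgue_null A -> lebesgue_null (diag_shift c @^-1` A).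
Proof.
move=> A0 eps eps_gt0; have [a [b [ab [Acov Avol]]]] := A0 eps eps_gt0.
exists (fun k => diag_shift (- c) (a k)), (fun k => diag_shift (- c) (b k)).
split; [|split].
- by move=> k i; rewrite !tnth_mktuple lerD2r.
- move=> x /Acov [k _ xk]; exists k => // i.
  have := xk i; rewrite !tnth_mktuple => /andP[axk xbk].
  by rewrite lerBlDr axk lerBrDr.
- apply: le_trans Avol; rewrite le_eqVlt; apply/orP; left; apply/eqP.
  apply: eq_eseriesr => k _; congr EFin; apply: eq_bigr => i _.
  by rewrite !tnth_mktuple opprB addrA subrK.
Qed.

End diagonal_shift.

Section coin_mixture.
Context {R : realType} {dT : measure_display} {T : measurableType dT}.
Variable mu : probability T R.

Definition with_coin (b : bool) (x : T) : T * bool := (x, b).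

Lemma measurable_with_coin b : measurable_fun setT (with_coin b).
Proof. exact: measurable_fun_pair. Qed.

HB.instance Definition _ b :=
  isMeasurableFun.Build _ _ _ _ (with_coin b) (measurable_with_coin b).

Definition coin_mix := mscale (2^-1)%:nng
  (measure_add (distribution mu (with_coin false))
               (distribution mu (with_coin true))).

HB.instance Definition _ := Measure.on coin_mix.

Lemma coin_mixE A : coin_mix A =
  ((2^-1)%:E * (mu (with_coin false @^-1` A) + mu (with_coin true @^-1` A)))%E.
Proof. by rewrite /coin_mix /mscale; congr (_ * _)%E; exact: measure_addE. Qed.

Lemma coin_mix_setT : coin_mix setT = 1%:E.
Proof.
rewrite coin_mixE !preimage_setT !probability_setT -EFinD -EFinM.
by congr EFin; field.
Qed.

HB.instance Definition _ :=
  Measure_isProbability.Build _ _ _ coin_mix coin_mix_setT.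

Lemma coin_mix_eq0 A : coin_mix A = 0%E ->
  mu (with_coin false @^-1` A) = 0%E /\ mu (with_coin true @^-1` A) = 0%E.
Proof.
rewrite coin_mixE => /eqP; rewrite mule_eq0 eqe invr_eq0 pnatr_eq0 /=.
by rewrite padde_eq0 ?measure_ge0 // => /andP[/eqP -> /eqP ->].
Qed.

End coin_mixture.

Section coin_process.
Context {R : realType} {d : nat}.

Definition coin_process (t : R) (w : d.-tuple R * bool) : d.-tuple R :=
  diag_shift (t * w.2%:R) w.1.

Lemma measurable_coin_process t : measurable_fun setT (coin_process t).
Proof.
apply/measurable_fun_tnthP => i.
have -> : (fun x => tnth x i) \o coin_process t =
          (fun w => tnth w.1 i + t * w.2%:R).
  by apply/funext => w /=; rewrite tnth_mktuple.
apply: measurable_realfun.measurable_funD.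
  exact: measurableT_comp (measurable_tnth i) measurable_fst.
by apply: (measurableT_comp (f := fun b : bool => t * b%:R)) measurable_snd.
Qed.

HB.instance Definition _ t :=
  isMeasurableFun.Build _ _ _ _ (coin_process t) (measurable_coin_process t).

Lemma coin_process0 w : coin_process 0 w = w.1.
Proof. by rewrite /coin_process mul0r diag_shift0. Qed.

Lemma coin_process_tails t x : coin_process t (x, false) = x.
Proof. by rewrite /coin_process mulr0 diag_shift0. Qed.

Lemma coin_process_heads t x : coin_process t (x, true) = diag_shift t x.
Proof. by rewrite /coin_process mulr1. Qed.

Lemma coord_path_coin_process w i :
  coord_path coin_process w i = (fun s => tnth w.1 i + s * w.2%:R).
Proof. by apply/funext => s; rewrite /coord_path tnth_mktuple. Qed.

Lemma derivable_coin_process w i t :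
  derivable (coord_path coin_process w i) t 1 /\
  derivable (derive1 (coord_path coin_process w i)) t 1.
Proof.
by rewrite coord_path_coin_process; split;
  [exact: derivable_affine | exact: derivable_derive1_affine].
Qed.

Variable mu0 : probability (d.-tuple R) R.

Lemma spline_cost_coin_process : spline_cost (coin_mix mu0) coin_process = 0%E.
Proof.
apply: spline_cost_eq0 => w i t.
by rewrite coord_path_coin_process derive1_derive1_affine.
Qed.

Lemma coin_mix_coin_processE t A : coin_mix mu0 (coin_process t @^-1` A) =
  ((2^-1)%:E * (mu0 A + mu0 (diag_shift t @^-1` A)))%E.
Proof.
rewrite coin_mixE; congr (_ * (mu0 _ + mu0 _))%E; apply/funext => x.
- by rewrite /preimage /with_coin /= coin_process_tails.
- by rewrite /preimage /with_coin /= coin_process_heads.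
Qed.

Lemma law_coin_process0 A : measurable A ->
  coin_mix mu0 (coin_process 0 @^-1` A) = mu0 A.
Proof.
move=> mA; rewrite coin_mix_coin_processE diag_shift0 preimage_id.
have /fineK <- := fin_num_measure mu0 A mA.
by rewrite -EFinD -EFinM; congr EFin; field.
Qed.

Lemma abs_cont_law_coin_process t : abs_cont mu0 ->
  abs_cont (distribution (coin_mix mu0) (coin_process t)).
Proof.
move=> mu0_ac A mA A0; rewrite /= /pushforward coin_mix_coin_processE.
have mA_shift : measurable (diag_shift t @^-1` A).
  by rewrite -[_ @^-1` _]setTI; exact: measurable_diag_shift.
rewrite (mu0_ac A mA A0) (mu0_ac _ mA_shift (lebesgue_null_diag_shift t _ A0)).
by rewrite adde0 mule0.
Qed.

Lemma coin_process_not_ae_function (d_gt0 : (0 < d)%N) :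
  ~ exists g : d.-tuple R -> d.-tuple R,
      {ae coin_mix mu0, forall w, coin_process 1 w = g (coin_process 0 w)}.
Proof.
move=> [g [Ns [mNs /coin_mix_eq0 [tails0 heads0] subNs]]].
have mNs_coin b : measurable (with_coin b @^-1` Ns).
  by rewrite -[_ @^-1` _]setTI; exact: measurable_with_coin.
have cover : setT `<=` with_coin false @^-1` Ns `|` with_coin true @^-1` Ns.
  move=> x _; have [gx|gx] := eqVneq (g x) x; [right|left]; apply: subNs => /=.
  - rewrite coin_process_heads coin_process0 gx.
    by apply/eqP; exact: diag_shift_neq (oner_neq0 R).
  - by rewrite coin_process_tails coin_process0 => /esym/eqP; exact/negP.
have mu0T0 : mu0 setT = 0%E.
  apply: subset_measure0 cover _ => //; first exact: measurableU.
  exact: null_set_setU.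
by move: mu0T0; rewrite probability_setT => /eqP; rewrite eqe oner_eq0.
Qed.

End coin_process.

Theorem proposition5 (R : realType) (d N : nat) (hd : (0 < d)%N) (hN : (0 < N)%N)
  (mu0 : probability (d.-tuple R) R) :
  abs_cont mu0 -> finite_second_moment mu0 ->
  exists mu : nat -> probability (d.-tuple R) R,
    mu 0%N = mu0 /\
    (forall k, (1 <= k <= N)%N -> abs_cont (mu k)) /\
    exists (dO : measure_display) (O : measurableType dO)
           (P : probability O R) (Y : R -> O -> d.-tuple R),
      optimal_solution P N mu Y /\
      ~ exists g : d.-tuple R -> d.-tuple R,
          measurable_fun setT g /\ {ae P, forall w, Y 1 w = g (Y 0 w)}.
Proof.
move=> mu0_ac _.
pose P := coin_mix mu0.
(* [mu 0] must be [mu0] itself: the law of [coin_process 0] only agrees with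
   it as a set function. *)
pose mu k := if k is 0%N then mu0
             else distribution P (coin_process (k%:R / N%:R)) : probability _ R.
exists mu; split=> //; split.
  by case=> // k _; exact: abs_cont_law_coin_process.
exists _, _, P, coin_process; split.
  apply: optimal_solution_cost0 (spline_cost_coin_process mu0).
  split; [exact: measurable_coin_process | exact: derivable_coin_process |].
  by case=> [_ A mA | k _ A mA //]; rewrite mul0r; exact: law_coin_process0.
by move=> [g [_ Y1_ae]]; apply: (coin_process_not_ae_function mu0 hd); exists g.
Qed.
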